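(* The $\sigma$-finiteness hypothesis in the occupancy equivalence cannot be dropped: (a) there exist an MDP and a policy $\pi$ whose occupancy measure is not $\sigma$-finite for which the ratio $\tilde\pi(a|s)=\mu^\pi_\gamma(s,a)/\mu^\pi_\gamma(s)$ is undetermined; and (b) there exist an MDP and a policy $\pi$ whose occupancy measure is not $\sigma$-finite such that no Markovian policy has the same occupancy measure as $\pi$.
   Context: MDP $m=\langle \mathcal{S},\mathcal{A},p_0,p,r,\gamma\rangle$ with state/action spaces, terminal state $s_f$ (reaching it ends the episode), initial distribution $p_0$, transition kernel $p$, reward $r$, discount $\gamma\in[0,1]$. A policy maps trajectory histories to distributions over actions; Markovian if it depends only on the current state. Occupancy measure: $\mu^\pi_\gamma(\sigma,\alpha)=\mathbb{E}[\sum_{t\ge0}\gamma^t\mathbf{1}(S_t\in\sigma)\mathbf{1}(A_t\in\alpha)]$, $\mu^\pi_\gamma(\sigma)=\mu^\pi_\gamma(\sigma,\mathcal{A})$, with values in $[0,\infty]$. A measure is $\sigma$-finite if the space is a countable union of sets of finite measure. *)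

From HB Require Import structures.
From mathcomp Require Import all_boot all_order all_algebra.
From mathcomp Require Import boolp classical_sets reals ereal sequences.
Set Implicit Arguments. Unset Strict Implicit. Unset Printing Implicit Defensive.
Import Order.TTheory GRing.Theory Num.Theory.
Local Open Scope classical_set_scope.
Local Open Scope ring_scope.

Record mdp (R : realType) := MDP {
  st : finType;
  act : finType;
  p0 : st -> R;
  trans : st -> act -> st -> R;
  rew : st -> act -> R;
  sf : st;
  gam : R;
  p0_ge0 : forall s, 0 <= p0 s;
  p0_sum : \sum_(s : st) p0 s = 1;
  trans_ge0 : forall s a s', 0 <= trans s a s';
  trans_sum : forall s a, \sum_(s' : st) trans s a s' = 1;
  gam_ge0 : 0 <= gam;
  gam_le1 : gam <= 1 }.
Arguments p0 {R} m.
Arguments trans {R} m.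
Arguments rew {R} m.
Arguments sf {R} m.
Arguments gam {R} m.

(* A (history-dependent) policy: given the past state-action pairs
   h = [(s_0,a_0);...;(s_{t-1},a_{t-1})] and the current state s_t,
   a probability distribution over actions. *)
Record policy (R : realType) (M : mdp R) := Policy {
  pol : seq (st M * act M) -> st M -> act M -> R;
  pol_ge0 : forall h s a, 0 <= pol h s a;
  pol_sum : forall h s, \sum_(a : act M) pol h s a = 1 }.

Definition is_markov (R : realType) (M : mdp R) (pi : policy M) :=
  exists k : st M -> act M -> R, forall h s a, pol pi h s a = k s a.

Definition markov_kernel (R : realType) (M : mdp R) (k : st M -> act M -> R) :=
  (forall s a, 0 <= k s a) /\ (forall s, \sum_(a : act M) k s a = 1).

Section Occupancy.
Variables (R : realType) (M : mdp R) (pi : policy M).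

Definition stseq (h : seq (st M * act M)) (s : st M) : seq (st M) :=
  map fst h ++ [:: s].

(* probability that the trajectory starts with history h, then is in state s,
   and the episode has not ended (no s_i = sf for i < size h) *)
Definition traj_weight (h : seq (st M * act M)) (s : st M) : R :=
  p0 M (nth s (stseq h s) 0) *
  \prod_(i < size h)
    (let x := tnth (in_tuple h) i in
     ((x.1 != sf M)%:R * pol pi (take i h) x.1 x.2 *
      trans M x.1 x.2 (nth s (stseq h s) i.+1))).

(* P(S_t = s, A_t = a, episode not yet ended at time t) *)
Definition occ_t (t : nat) (s : st M) (a : act M) : R :=
  \sum_(h : t.-tuple (st M * act M))
     traj_weight h s * (s != sf M)%:R * pol pi h s a.

Definition occupancy (E : set (st M * act M)) : \bar R :=
  (\sum_(t <oo) ((gam M ^+ t) * \sum_(x : st M * act M | x \in E) occ_t t x.1 x.2)%:E)%E.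

End Occupancy.

(* sigma-finiteness: the whole space is a countable union of sets of finite
   measure (all sets are measurable in the discrete setting) *)
Definition sigma_finite_on (T : Type) (R : realType) (mu : set T -> \bar R) :=
  exists F : nat -> set T, \bigcup_n F n = setT /\ forall n, (mu (F n) < +oo)%E.

(* In [loop_mdp] the agent starts in the non-terminal state [false], every
   transition leads back to [false], and gamma = 1.  Hence, for a policy that
   plays [a] at time [t] with probability [g t a], the occupancy of
   [(false, a)] is the series [\sum_t g t a], while the terminal state [true]
   has zero occupancy.
   (a) Under a fair coin both pairs [(false, a)] have infinite occupancy, so
   mu(s, a) = mu(s) k(a | s) holds for every positive kernel k.
   (b) Tossing a fair coin at time 0 and then always playing [true] gives
   mu(false, false) = 1/2, whereas under a Markov kernel that series has
   constant terms, so it is 0 or +oo. *)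

From HB Require Import structures.
From mathcomp Require Import all_boot all_order all_algebra.
From mathcomp Require Import boolp classical_sets reals ereal sequences.
From mathcomp Require Import lra.
Import Order.TTheory GRing.Theory Num.Theory.
Local Open Scope classical_set_scope.
Local Open Scope ring_scope.
Set Implicit Arguments. Unset Strict Implicit.

Section TupleRcons.
Variables (T : finType) (n : nat).

Definition tuple_rcons (p : n.-tuple T * T) : n.+1.-tuple T :=
  [tuple of rcons p.1 p.2].

Definition tuple_unrcons (u : n.+1.-tuple T) : n.-tuple T * T :=
  ([tuple of belast (thead u) (behead u)], last (thead u) (behead u)).

Lemma thead_behead (u : n.+1.-tuple T) : thead u :: behead u = u.
Proof. by case: u => -[]. Qed.

Lemma tuple_unrconsK : cancel tuple_unrcons tuple_rcons.
Proof. by move=> u; apply: val_inj; rewrite /= -lastI thead_behead. Qed.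

Lemma tuple_rconsK : cancel tuple_rcons tuple_unrcons.
Proof.
case=> h x; set u := tuple_rcons (h, x).
move: (lastI (thead u) (behead u)); rewrite thead_behead => /rcons_inj[hE xE].
by congr pair; [apply: val_inj|].
Qed.

Lemma big_tupleS_rcons (V : nmodType) (F : n.+1.-tuple T -> V) :
  \sum_(u : n.+1.-tuple T) F u =
  \sum_(h : n.-tuple T) \sum_(x : T) F (tuple_rcons (h, x)).
Proof.
rewrite pair_big /= (reindex tuple_rcons) //.
by exists tuple_unrcons => u _; [exact: tuple_rconsK | exact: tuple_unrconsK].
Qed.

End TupleRcons.

Lemma big_tuple0 (T : finType) (V : nmodType) (F : 0.-tuple T -> V) :
  \sum_(u : 0.-tuple T) F u = F [tuple].
Proof.
by rewrite (big_pred1 [tuple]) // => u; apply/esym/eqP; exact: tuple0.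
Qed.

Section Trajectories.
Variables (R : realType) (M : mdp R) (pi : policy M).

Definition traj_step (h : seq (st M * act M)) (s : st M) x0 (i : nat) : R :=
  let x := nth x0 h i in
  (x.1 != sf M)%:R * pol pi (take i h) x.1 x.2 *
  trans M x.1 x.2 (nth s (stseq h s) i.+1).

Lemma traj_weight_nat h s x0 : traj_weight pi h s =
  p0 M (nth s (stseq h s) 0) * \prod_(0 <= i < size h) traj_step h s x0 i.
Proof.
rewrite /traj_weight big_mkord; congr (_ * _); apply: eq_bigr => i _.
by rewrite /traj_step (tnth_nth x0).
Qed.

Lemma size_stseq h s : size (stseq (M := M) h s) = (size h).+1.
Proof. by rewrite /stseq size_cat size_map addn1. Qed.

Lemma traj_weight_rcons h x s : traj_weight pi (rcons h x) s =
  traj_weight pi h x.1 *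
  ((x.1 != sf M)%:R * pol pi h x.1 x.2 * trans M x.1 x.2 s).
Proof.
have stseq_rcons : stseq (rcons h x) s = rcons (stseq h x.1) s.
  by rewrite /stseq map_rcons -!cats1.
have nth_stseq_rcons i : (i <= size h)%N ->
    nth s (stseq (rcons h x) s) i = nth x.1 (stseq h x.1) i.
  move=> leih; rewrite stseq_rcons nth_rcons size_stseq ltnS leih.
  by apply: set_nth_default; rewrite size_stseq ltnS.
rewrite !(traj_weight_nat _ _ x) size_rcons big_nat_recr //= -mulrA.
congr (_ * (_ * _)).
- by rewrite nth_stseq_rcons.
- apply: eq_big_nat => i /andP[_ ltih].
  rewrite /traj_step nth_rcons ltih nth_stseq_rcons //.
  by rewrite -cats1 takel_cat // ltnW.
- rewrite /traj_step stseq_rcons !nth_rcons size_stseq !ltnn !eqxx.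
  by rewrite -cats1 take_size_cat.
Qed.

Lemma sum_traj_weightS t s :
  \sum_(h : t.+1.-tuple (st M * act M)) traj_weight pi h s =
  \sum_(h : t.-tuple (st M * act M)) \sum_(x : st M * act M)
     traj_weight pi h x.1 *
     ((x.1 != sf M)%:R * pol pi h x.1 x.2 * trans M x.1 x.2 s).
Proof.
rewrite big_tupleS_rcons; apply: eq_bigr => h _; apply: eq_bigr => x _.
exact: traj_weight_rcons.
Qed.

Lemma sum_traj_weightS_const_trans (q : st M -> R) t s :
    (forall s a s', trans M s a s' = q s') ->
  \sum_(h : t.+1.-tuple (st M * act M)) traj_weight pi h s =
  q s * \sum_(h : t.-tuple (st M * act M)) \sum_(s' : st M)
     traj_weight pi h s' * (s' != sf M)%:R.
Proof.
move=> transE; rewrite sum_traj_weightS mulr_sumr; apply: eq_bigr => h _.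
rewrite -(pair_bigA _ (fun s' a => traj_weight pi h s' *
  ((s' != sf M)%:R * pol pi h s' a * trans M s' a s))) mulr_sumr.
apply: eq_bigr => s' _; under eq_bigr do rewrite transE mulrA mulrAC.
by rewrite -!mulr_sumr pol_sum mulr1 mulrAC mulrC.
Qed.

Lemma occ_t_time_dependent (g : nat -> st M -> act M -> R) t s a :
    (forall h s a, pol pi h s a = g (size h) s a) ->
  occ_t pi t s a =
  (\sum_(h : t.-tuple (st M * act M)) traj_weight pi h s) *
  (s != sf M)%:R * g t s a.
Proof.
move=> polE; rewrite /occ_t.
by under eq_bigr do rewrite polE size_tuple; rewrite -!mulr_suml.
Qed.

End Trajectories.

Lemma series_lbound_pinfty (R : realType) (f : nat -> R) (c : R) :
  0 < c -> (forall t, c <= f t) -> (\sum_(t <oo) (f t)%:E = +oo)%E.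
Proof.
move=> c_gt0 cf; apply: eq_infty => r.
have f_ge0 t : (0 <= t)%N -> true -> (0 <= (f t)%:E)%E.
  by move=> _ _; rewrite lee_fin (le_trans (ltW c_gt0)).
pose k := Num.bound (`|r| / c).
apply: (le_trans _ (nneseries_lim_ge k f_ge0)).
rewrite sumEFin lee_fin (le_trans _ (ler_sum _ (fun t _ => cf t))) //.
rewrite sumr_const_nat subn0 -mulr_natl.
have := archi_boundP (divr_ge0 (normr_ge0 r) (ltW c_gt0)).
by rewrite ltr_pdivrMr // => /ltW; exact: le_trans (ler_norm r).
Qed.

Lemma pinfty_atom_not_sigma_finite (T : Type) (R : realType)
    (mu : set T -> \bar R) x :
  (forall E, E x -> mu E = +oo%E) -> ~ sigma_finite_on mu.
Proof.
move=> mu_x [F [Fcover Ffin]].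
have [n _ Fnx] : (\bigcup_n F n) x by rewrite Fcover.
by have := Ffin n; rewrite mu_x // ltxx.
Qed.

Section Coin.
Variable R : realType.

Definition coin (p : R) (a : bool) : R := if a then p else 1 - p.

Lemma coin_ge0 p a : 0 <= p <= 1 -> 0 <= coin p a.
Proof. by case: a => /andP[p_ge0 p_le1]; rewrite /coin ?subr_ge0. Qed.

Lemma coin_gt0 p a : 0 < p < 1 -> 0 < coin p a.
Proof. by case: a => /andP[p_gt0 p_lt1]; rewrite /coin ?subr_gt0. Qed.

Lemma sum_coin p : \sum_(a : bool) coin p a = 1.
Proof. by rewrite big_bool /coin /= addrC subrK. Qed.

End Coin.

Section LoopMDP.
Variable R : realType.

Definition delta_false (s : bool) : R := (s == false)%:R.

Lemma delta_false_ge0 s : 0 <= delta_false s.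
Proof. exact: ler0n. Qed.

Lemma sum_delta_false : \sum_(s : bool) delta_false s = 1.
Proof. by rewrite big_bool /delta_false /= add0r. Qed.

Definition loop_mdp : mdp R :=
  @MDP R bool bool delta_false (fun _ _ => delta_false) (fun _ _ => 0) true 1
    delta_false_ge0 sum_delta_false (fun _ _ => delta_false_ge0)
    (fun _ _ => sum_delta_false) ler01 (lexx 1).

Lemma loop_state_weight (pi : policy loop_mdp) t s :
  \sum_(h : t.-tuple (bool * bool)) traj_weight pi h s = delta_false s.
Proof.
elim: t s => [|t IH] s.
  by rewrite big_tuple0 /traj_weight big_ord0 mulr1.
rewrite (@sum_traj_weightS_const_trans _ loop_mdp _ delta_false) //.
rewrite exchange_big big_bool -!mulr_suml !IH /delta_false /=.
by rewrite !mulr0 mulr1 add0r mulr1.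
Qed.

Section TimeDependentPolicy.
Variables (pi : policy loop_mdp) (g : nat -> bool -> bool -> R).
Hypothesis polE : forall h s a, pol pi h s a = g (size h) s a.

Lemma time_policy_ge0 t s a : 0 <= g t s a.
Proof. by rewrite -(size_nseq t (false, false)) -polE pol_ge0. Qed.

Lemma loop_occupancyE E : occupancy pi E =
  (\sum_(t <oo) (\sum_(x : bool * bool | x \in E)
                   delta_false x.1 * g t x.1 x.2)%:E)%E.
Proof.
apply: eq_eseriesr => t _; rewrite expr1n mul1r; congr EFin.
apply: eq_bigr => -[s a] _; rewrite (occ_t_time_dependent _ _ _ polE).
by rewrite loop_state_weight; case: s; rewrite /delta_false /= ?mul0r ?mulr1.
Qed.

Lemma loop_occupancy_pinfty E a c : 0 < c -> (forall t, c <= g t false a) ->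
  E (false, a) -> occupancy pi E = +oo%E.
Proof.
move=> c_gt0 cg Efa; rewrite loop_occupancyE.
apply: (series_lbound_pinfty c_gt0) => t.
rewrite (bigD1 (false, a)) /=; last exact: mem_set.
rewrite /delta_false mul1r (le_trans (cg t)) // lerDl sumr_ge0 // => x _.
by rewrite mulr_ge0 ?delta_false_ge0 ?time_policy_ge0.
Qed.

Lemma loop_occupancy_terminal E : E `<=` [set x | x.1 = true] ->
  occupancy pi E = 0%E.
Proof.
move=> Eterm; rewrite loop_occupancyE; apply: eseries0 => t _ _.
by rewrite big1 // => x /set_mem /Eterm ->; rewrite mul0r.
Qed.

Lemma loop_occupancy1 a :
  occupancy pi [set (false, a)] = (\sum_(t <oo) (g t false a)%:E)%E.
Proof.
rewrite loop_occupancyE; apply: eq_eseriesr => t _; congr EFin.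
rewrite (big_pred1 (false, a)) ?mul1r // => x.
by apply/idP/eqP => [/set_mem | ->] //; exact: mem_set.
Qed.

End TimeDependentPolicy.

Lemma loop_markov_occupancy1 (pi : policy loop_mdp) a : is_markov pi ->
  occupancy pi [set (false, a)] = 0%E \/ occupancy pi [set (false, a)] = +oo%E.
Proof.
move=> [k polE]; rewrite (@loop_occupancy1 pi (fun=> k) polE).
have [k0|k_neq0] := eqVneq (k false a) 0.
  by left; apply: eseries0 => t _ _; rewrite k0.
right; apply: (@series_lbound_pinfty _ _ (k false a)) => //.
by rewrite lt_def k_neq0 -(polE [::]) pol_ge0.
Qed.

Lemma coin_markov_kernel p : 0 <= p <= 1 ->
  markov_kernel (M := loop_mdp) (fun _ => coin p).
Proof.
by move=> p_itv; split=> [s a|s]; [exact: coin_ge0 | exact: sum_coin].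
Qed.

Lemma half_itv : 0 <= (2^-1 : R) <= 1.
Proof. by apply/andP; split; lra. Qed.

Definition fair_coin : policy loop_mdp :=
  @Policy R loop_mdp (fun _ _ => coin 2^-1)
    (fun _ _ a => coin_ge0 a half_itv) (fun _ _ => sum_coin 2^-1).

Definition commit_prob (t : nat) : R := if t == 0%N then 2^-1 else 1.

Lemma commit_prob_itv t : 0 <= commit_prob t <= 1.
Proof.
by rewrite /commit_prob; case: eqP => _; [exact: half_itv | rewrite ler01 lexx].
Qed.

Definition explore_then_commit : policy loop_mdp :=
  @Policy R loop_mdp (fun h _ => coin (commit_prob (size h)))
    (fun h _ a => coin_ge0 a (commit_prob_itv (size h)))
    (fun h _ => sum_coin (commit_prob (size h))).

Lemma fair_coin_occupancy_pinfty E a :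
  E (false, a) -> occupancy fair_coin E = +oo%E.
Proof.
have cg (t : nat) : 2^-1 <= coin 2^-1 a :> R.
  by rewrite /coin; case: a => //; lra.
by apply: (loop_occupancy_pinfty (g := fun _ _ => coin 2^-1) _ _ cg).
Qed.

Lemma fair_coin_occupancy_ratio (k : bool -> bool -> R) :
    (forall s a, 0 < k s a) ->
  forall s a, occupancy fair_coin [set (s, a)] =
    (occupancy fair_coin ([set s] `*` setT) * (k s a)%:E)%E.
Proof.
move=> k_gt0 [] a; last first.
  by rewrite !(@fair_coin_occupancy_pinfty _ a) //= gt0_mulye ?lte_fin.
rewrite !(@loop_occupancy_terminal _ (fun _ _ => coin 2^-1)) ?mul0e //.
all: by move=> -[s' a'] /= [->].
Qed.

Lemma explore_then_commit_occupancy_pinfty E :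
  E (false, true) -> occupancy explore_then_commit E = +oo%E.
Proof.
have cg t : 2^-1 <= coin (commit_prob t) true :> R.
  by rewrite /coin /commit_prob; case: eqP => _ //; lra.
by apply: (loop_occupancy_pinfty (g := fun t _ => coin (commit_prob t)) _ _ cg).
Qed.

Lemma explore_then_commit_occupancy_false_false :
  occupancy explore_then_commit [set (false, false)] = (2^-1)%:E.
Proof.
rewrite (@loop_occupancy1 _ (fun t _ => coin (commit_prob t))) //.
rewrite nneseries_recl //; last first.
  by move=> t _; rewrite lee_fin coin_ge0 ?commit_prob_itv.
rewrite eseries0 ?adde0 => [|[|t] // _ _].
  by rewrite /coin /commit_prob /=; congr EFin; lra.
by rewrite /coin /commit_prob /= subrr.
Qed.

Lemma explore_then_commit_not_markov_realizable : ~ exists pi : policy loop_mdp,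
  is_markov pi /\ occupancy pi = occupancy explore_then_commit.
Proof.
move=> [pi [pi_markov occE]]; have := loop_markov_occupancy1 false pi_markov.
rewrite occE explore_then_commit_occupancy_false_false => -[] // /eqP.
by rewrite eqe invr_eq0 pnatr_eq0.
Qed.

End LoopMDP.

Theorem proposition2 (R : realType) :
  (* (a) non-sigma-finite occupancy for which pi~(a|s) = mu(s,a)/mu(s) is undetermined:
     two Markov kernels both satisfy mu(s,a) = mu(s) * pi~(a|s) yet differ at a
     state of nonzero occupancy *)
  (exists (M : mdp R) (pi : policy M),
     ~ sigma_finite_on (occupancy pi) /\
     exists k1 k2 : st M -> act M -> R,
       markov_kernel k1 /\ markov_kernel k2 /\
       (forall s a, occupancy pi [set (s, a)] =
                    (occupancy pi ([set s] `*` setT) * (k1 s a)%:E)%E) /\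
       (forall s a, occupancy pi [set (s, a)] =
                    (occupancy pi ([set s] `*` setT) * (k2 s a)%:E)%E) /\
       exists s a, occupancy pi ([set s] `*` setT) <> 0%E /\ k1 s a <> k2 s a) /\
  (* (b) non-sigma-finite occupancy not realised by any Markovian policy *)
  (exists (M : mdp R) (pi : policy M),
     ~ sigma_finite_on (occupancy pi) /\
     ~ exists pi' : policy M, is_markov pi' /\ occupancy pi' = occupancy pi).
Proof.
split; last first.
  exists (loop_mdp R), (explore_then_commit R); split.
    apply: (pinfty_atom_not_sigma_finite (x := (false, true))) => E.
    exact: explore_then_commit_occupancy_pinfty.
  exact: explore_then_commit_not_markov_realizable.
exists (loop_mdp R), (fair_coin R); split.
  apply: (pinfty_atom_not_sigma_finite (x := (false, true))) => E.
  exact: fair_coin_occupancy_pinfty.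
have coin_ratio p : 0 < p -> p < 1 ->
    markov_kernel (M := loop_mdp R) (fun _ => coin p) /\
    forall s a, occupancy (fair_coin R) [set (s, a)] =
      (occupancy (fair_coin R) ([set s] `*` setT) * (coin p a)%:E)%E.
  move=> p_gt0 p_lt1; split.
    by apply: coin_markov_kernel; apply/andP; split; lra.
  by apply: fair_coin_occupancy_ratio => s a; apply: coin_gt0; rewrite p_gt0.
have [k1_kernel k1_ratio] := coin_ratio 2^-1 ltac:(lra) ltac:(lra).
have [k2_kernel k2_ratio] := coin_ratio 4^-1 ltac:(lra) ltac:(lra).
exists (fun _ => coin 2^-1), (fun _ => coin 4^-1); do 4!split => //.
exists false, true; split; last by rewrite /coin; lra.
by rewrite (@fair_coin_occupancy_pinfty _ _ true).
Qed.
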